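(* Let $q$ be an odd prime power, $s=(q-1)/2$, $a_0,a_1\in\mathbb{F}_q^*$ and $r_0,r_1$ positive integers. Let $$f(x)=\tfrac12 a_0x^{r_0}(1+x^s)+\tfrac12 a_1x^{r_1}(1-x^s).$$ If $f$ is a permutation polynomial of $\mathbb{F}_q$, then its inverse over $\mathbb{F}_q$ is given by $$f^{-1}(x)=\frac12\left(\frac{x}{a_0}\right)^{\tilde r_0}\left(1+\left(\frac{x}{a_0}\right)^s\right)+\frac12(-1)^{t_1}\left(\frac{x}{a_1}\right)^{\tilde r_1}\left(1+(-1)^{r_1}\left(\frac{x}{a_1}\right)^s\right),$$ where $\tilde r_i,t_i\in\mathbb{Z}$ satisfy $1\le\tilde r_i<s$ and $r_i\tilde r_i+st_i=1$ for $i=0,1$.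
   Context: A polynomial $f\in\mathbb{F}_q[x]$ is a permutation polynomial of $\mathbb{F}_q$ if it induces a bijection of $\mathbb{F}_q$. A polynomial $g$ is the inverse of $f$ over $\mathbb{F}_q$ if $g(f(c))=c$ for all $c\in\mathbb{F}_q$. *)

From mathcomp Require Import all_boot all_order all_algebra all_field.
Set Implicit Arguments. Unset Strict Implicit. Unset Printing Implicit Defensive.
Import GRing.Theory.
Local Open Scope ring_scope.

Definition is_perm_poly (F : finFieldType) (f : {poly F}) : Prop :=
  bijective (fun c : F => f.[c]).

Definition is_inverse_poly (F : finFieldType) (g f : {poly F}) : Prop :=
  forall c : F, g.[f.[c]] = c.

Definition half_order (F : finFieldType) : nat := (#|F|.-1)./2.

Definition fpoly (F : finFieldType) (a0 a1 : F) (r0 r1 : nat) : {poly F} :=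
  let s := half_order F in
  (2%:R : F)^-1 *: (a0 *: 'X^r0 * (1 + 'X^s))
  + (2%:R : F)^-1 *: (a1 *: 'X^r1 * (1 - 'X^s)).

Definition ginv (F : finFieldType) (a0 a1 : F) (r1 rt0 rt1 : nat) (t1 : int)
  : {poly F} :=
  let s := half_order F in
  let y0 := a0^-1 *: 'X in
  let y1 := a1^-1 *: 'X in
  (2%:R : F)^-1 *: (y0 ^+ rt0 * (1 + y0 ^+ s))
  + ((2%:R : F)^-1 * ((-1 : F) ^ t1)) *:
      (y1 ^+ rt1 * (1 + ((-1 : F) ^+ r1) *: y1 ^+ s)).

(* For c <> 0 the sign c^s = +-1 tells whether c is a square.  On squares
   f(c) = a0 c^r0 and on non-squares f(c) = a1 c^r1, so f(c)^s is a0^s resp.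
   (-1)^r1 a1^s.  If these signs agreed, f would inject the q - 1 nonzero
   elements into the at most s roots of y^s = a0^s; hence they are opposite,
   and then the signs of (y/a0)^s and (y/a1)^s, for y = f(c), select the term
   of the inverse that undoes the right branch, using
   c^(r_i rt_i) = c (c^s)^-t_i. *)

From mathcomp Require Import all_boot all_order all_algebra all_field.
From mathcomp Require Import all_fingroup cyclic ring.
Import GRing.Theory FinRing.Theory.
Local Open Scope ring_scope.
Set Implicit Arguments. Unset Strict Implicit.

Lemma mulrn_card_finZmod (V : finZmodType) (x : V) : x *+ #|V| = 0.
Proof. by rewrite -cardsT -zmodXgE (expg_cardG (G := [set: V]%G)) ?inE. Qed.

Lemma two_neq0_odd_card (F : finFieldType) : odd #|F| -> 2%:R != 0 :> F.
Proof.
move=> oddF; apply: contra_neq (oner_neq0 F) => two0.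
have := mulrn_card_finZmod (1 : F).
by rewrite -[#|F|]odd_double_half oddF -mul2n mulrnDr mulrnA two0 mul0rn addr0.
Qed.

Lemma card_expr_fibre (R : finIdomainType) (n : nat) (e : R) :
  (0 < n)%N -> (#|[set y : R | y ^+ n == e]| <= n)%N.
Proof.
move=> n_gt0; rewrite cardE -ltnS -(size_XnsubC e n_gt0).
apply: max_poly_roots; first by rewrite -size_poly_eq0 size_XnsubC.
- by apply/allP => y; rewrite mem_enum inE rootE !hornerE subr_eq0.
- exact: enum_uniq.
Qed.

Section HalfOrder.

Variable F : finFieldType.
Hypothesis oddF : odd #|F|.
Local Notation s := (half_order F).

Lemma card_half_order : #|F| = s.*2.+1.
Proof.
have := finNzRing_gt1 F; rewrite /half_order.
case: #|F| oddF => // m /= m_even _.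
by rewrite -[in LHS](odd_double_half m) (negbTE m_even).
Qed.

Lemma half_order_gt0 : (0 < s)%N.
Proof. by have := finNzRing_gt1 F; rewrite card_half_order ltnS double_gt0. Qed.

Lemma sqr_expr_half_order (c : F) : c != 0 -> (c ^+ s) ^+ 2 = 1.
Proof.
move=> c_neq0; apply: (mulfI c_neq0).
by rewrite mulr1 -exprM muln2 -exprS -card_half_order expf_card.
Qed.

Lemma expr_half_order_sign (c : F) :
  c != 0 -> c ^+ s = 1 \/ c ^+ s = -1.
Proof.
by move/sqr_expr_half_order/eqP; rewrite sqrf_eq1 => /orP[] /eqP; [left | right].
Qed.

End HalfOrder.

Lemma exprz_bezout (F : fieldType) (c : F) (n s : nat) (t : int) :
  c != 0 -> n%:Z + s%:Z * t = 1 -> c ^+ n * (c ^+ s) ^ t = c.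
Proof.
move=> c_neq0 bezout; have c_unit : c \is a GRing.unit by rewrite unitfE.
by rewrite !exprnP exprz_exp -exprzDr // bezout expr1z.
Qed.

Section FpolyEval.

Variables (F : finFieldType) (a0 a1 : F) (r0 r1 : nat).
Hypothesis two_neq0 : 2%:R != 0 :> F.
Local Notation s := (half_order F).
Local Notation f := (fpoly a0 a1 r0 r1).

Lemma fpolyE (c : F) :
  f.[c] = 2%:R^-1 * (a0 * c ^+ r0 * (1 + c ^+ s))
          + 2%:R^-1 * (a1 * c ^+ r1 * (1 - c ^+ s)).
Proof. by rewrite /fpoly !hornerE. Qed.

Lemma fpoly_square (c : F) : c ^+ s = 1 -> f.[c] = a0 * c ^+ r0.
Proof. by move=> cs1; rewrite fpolyE cs1; field. Qed.

Lemma fpoly_nonsquare (c : F) : c ^+ s = -1 -> f.[c] = a1 * c ^+ r1.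
Proof. by move=> csN1; rewrite fpolyE csN1; field. Qed.

Lemma fpoly0 : (0 < r0)%N -> (0 < r1)%N -> f.[0] = 0.
Proof.
move=> r0_gt0 r1_gt0; rewrite fpolyE !expr0n !eqn0Ngt r0_gt0 r1_gt0.
by rewrite !(mulr0, mul0r, addr0).
Qed.

End FpolyEval.

Section GinvEval.

Variables (F : finFieldType) (a0 a1 : F) (r1 rt0 rt1 : nat) (t1 : int).
Hypothesis two_neq0 : 2%:R != 0 :> F.
Local Notation s := (half_order F).
Local Notation g := (ginv a0 a1 r1 rt0 rt1 t1).

Lemma ginvE (y : F) :
  g.[y] = 2%:R^-1 * ((a0^-1 * y) ^+ rt0 * (1 + (a0^-1 * y) ^+ s))
    + (2%:R^-1 * (-1) ^ t1)
      * ((a1^-1 * y) ^+ rt1 * (1 + (-1) ^+ r1 * (a1^-1 * y) ^+ s)).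
Proof. by rewrite /ginv !(hornerE, horner_exp). Qed.

Lemma ginv_first_branch (y : F) :
  (a0^-1 * y) ^+ s = 1 -> (a1^-1 * y) ^+ s = - (-1) ^+ r1 ->
  g.[y] = (a0^-1 * y) ^+ rt0.
Proof.
move=> u0s u1s; rewrite ginvE u0s u1s mulrN -expr2 sqrr_sign.
by rewrite subrr !mulr0 addr0; field.
Qed.

Lemma ginv_second_branch (y : F) :
  (a0^-1 * y) ^+ s = -1 -> (a1^-1 * y) ^+ s = (-1) ^+ r1 ->
  g.[y] = (-1) ^ t1 * (a1^-1 * y) ^+ rt1.
Proof.
move=> u0s u1s; rewrite ginvE u0s u1s -expr2 sqrr_sign.
by rewrite subrr !mulr0 add0r; field.
Qed.

Lemma ginv0 : (0 < rt0)%N -> (0 < rt1)%N -> g.[0] = 0.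
Proof.
move=> rt0_gt0 rt1_gt0; rewrite ginvE !mulr0 !expr0n !eqn0Ngt rt0_gt0 rt1_gt0.
by rewrite !(mulr0, mul0r, addr0).
Qed.

End GinvEval.

Section PermutationFpoly.

Variables (F : finFieldType) (a0 a1 : F) (r0 r1 : nat).
Hypotheses (oddF : odd #|F|) (a0_neq0 : a0 != 0) (a1_neq0 : a1 != 0).
Local Notation s := (half_order F).
Local Notation f := (fpoly a0 a1 r0 r1).

Let two_neq0 : 2%:R != 0 :> F := two_neq0_odd_card oddF.

Lemma expr_fpoly_square (c : F) : c ^+ s = 1 -> f.[c] ^+ s = a0 ^+ s.
Proof.
move=> cs1; rewrite fpoly_square // exprMn -exprM mulnC exprM.
by rewrite cs1 expr1n mulr1.
Qed.

Lemma expr_fpoly_nonsquare (c : F) :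
  c ^+ s = -1 -> f.[c] ^+ s = (-1) ^+ r1 * a1 ^+ s.
Proof.
by move=> csN1; rewrite fpoly_nonsquare // exprMn -exprM mulnC exprM csN1 mulrC.
Qed.

Lemma injective_fpoly_sign :
  injective (horner f) -> a0 ^+ s = - ((-1) ^+ r1 * a1 ^+ s).
Proof.
move=> f_inj; set e0 := a0 ^+ s; set e1 := (-1) ^+ r1 * a1 ^+ s.
have /eqP : e0 ^+ 2 = e1 ^+ 2.
  by rewrite exprMn sqrr_sign mul1r !sqr_expr_half_order.
rewrite eqf_sqr => /orP[/eqP e01 | /eqP //]; exfalso.
have f_fibre : horner f @: [set~ 0] \subset [set y : F | y ^+ s == e0].
  apply/subsetP => y /imsetP[c]; rewrite !inE => c_neq0 ->.
  case: (expr_half_order_sign oddF c_neq0) => [cs1 | csN1].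
    by rewrite expr_fpoly_square.
  by rewrite expr_fpoly_nonsquare // -/e1 e01.
have := subset_leq_card f_fibre.
rewrite card_imset // cardsC1 card_half_order //= -addnn => /leq_trans.
move/(_ _ (card_expr_fibre e0 (half_order_gt0 oddF))).
by rewrite -[leqRHS]add0n leq_add2r leqNgt half_order_gt0.
Qed.

Variables (rt0 rt1 : nat) (t0 t1 : int).
Hypotheses (bezout0 : (r0 * rt0)%:Z + s%:Z * t0 = 1)
           (bezout1 : (r1 * rt1)%:Z + s%:Z * t1 = 1)
           (f_inj : injective (horner f)).
Local Notation g := (ginv a0 a1 r1 rt0 rt1 t1).

Lemma ginv_fpoly_square (c : F) : c != 0 -> c ^+ s = 1 -> g.[f.[c]] = c.
Proof.
move=> c_neq0 cs1; have sign := injective_fpoly_sign f_inj.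
have crs : (c ^+ r0) ^+ s = 1 by rewrite -exprM mulnC exprM cs1 expr1n.
rewrite fpoly_square // ginv_first_branch ?mulKf //.
- by rewrite -exprM -[RHS](exprz_bezout c_neq0 bezout0) cs1 exp1rz mulr1.
- by rewrite !exprMn crs mulr1 sign exprVn mulrN mulrCA mulVf ?mulr1 // expf_neq0.
Qed.

Lemma ginv_fpoly_nonsquare (c : F) : c != 0 -> c ^+ s = -1 -> g.[f.[c]] = c.
Proof.
move=> c_neq0 csN1; have sign := injective_fpoly_sign f_inj.
have crs : (c ^+ r1) ^+ s = (-1) ^+ r1 by rewrite -exprM mulnC exprM csN1.
rewrite fpoly_nonsquare // ginv_second_branch ?mulKf //.
- by rewrite -exprM -[RHS](exprz_bezout c_neq0 bezout1) csN1 mulrC.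
- rewrite !exprMn crs exprVn sign invrN invr_signM mulNr mulrA.
  by rewrite mulfVK ?expf_neq0 // -expr2 sqrr_sign.
Qed.

End PermutationFpoly.

Theorem corollary4p1 (F : finFieldType) (a0 a1 : F) (r0 r1 : nat)
    (rt0 rt1 : nat) (t0 t1 : int) :
  odd #|F| ->
  a0 != 0 -> a1 != 0 ->
  (0 < r0)%N -> (0 < r1)%N ->
  (1 <= rt0)%N -> (rt0 < half_order F)%N ->
  (1 <= rt1)%N -> (rt1 < half_order F)%N ->
  (r0 * rt0)%:Z + (half_order F)%:Z * t0 = 1 ->
  (r1 * rt1)%:Z + (half_order F)%:Z * t1 = 1 ->
  is_perm_poly (fpoly a0 a1 r0 r1) ->
  is_inverse_poly (ginv a0 a1 r1 rt0 rt1 t1) (fpoly a0 a1 r0 r1).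
Proof.
move=> oddF a0_neq0 a1_neq0 r0_gt0 r1_gt0 rt0_gt0 _ rt1_gt0 _ bezout0 bezout1.
move=> [f_inv fK _] c; have f_inj := can_inj fK.
have [-> | c_neq0] := eqVneq c 0.
  by rewrite fpoly0 // ginv0 // two_neq0_odd_card.
case: (expr_half_order_sign oddF c_neq0) => [cs1 | csN1].
- exact: (ginv_fpoly_square oddF a0_neq0 a1_neq0 rt1 t1 bezout0 f_inj c_neq0 cs1).
- exact: (ginv_fpoly_nonsquare oddF a0_neq0 a1_neq0 rt0 bezout1 f_inj c_neq0 csN1).
Qed.
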